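(* Let $\psi$ be an injective map from the positive integers to the positive integers and let $A=\{\psi(n): n\ge 1\}$. For every nonnegative integer $n$, \[ p^{A}(n)=\sum_{(N_0,N_1,N_2,\dots)}\ \prod_{j\ge 0} p^{A}_{1}(N_j), \] where the sum runs over all sequences $(N_0,N_1,N_2,\dots)$ of nonnegative integers (necessarily with only finitely many nonzero terms) satisfying $n=\sum_{i\ge 0}2^{i}N_i$.
   Context: For a set $A$ of positive integers and a positive integer $\alpha$, $p^{A}_{\alpha}(n)$ denotes the number of partitions of $n$ into parts from $A$ in which each part occurs at most $\alpha$ times, and $p^{A}(n)$ denotes the number of partitions of $n$ into parts from $A$ with no restriction on multiplicities. By convention $p^{A}_{\alpha}(0)=p^{A}(0)=1$, so the product on the right is effectively finite. (In the paper the sum is indexed by the rows of the ''solution matrix'' listing all nonnegative integer solutions of $n=\sum_{i\ge0}2^iN_i$.) *)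

From Stdlib Require Import ClassicalEpsilon.
From mathcomp Require Import all_boot.
Set Implicit Arguments. Unset Strict Implicit. Unset Printing Implicit Defensive.

Definition imageA (psi : nat -> nat) : pred nat :=
  fun a => if excluded_middle_informative (exists k, 0 < k /\ psi k = a)
           then true else false.

(* A partition of n is encoded by its multiplicity function m : part k |-> m k.
   Every part is <= n and every multiplicity is <= n, so 'I_n.+1 suffices.
   Index 0 must have multiplicity 0 (parts are positive and belong to A). *)
Definition is_partA (A : pred nat) (n : nat) (m : {ffun 'I_n.+1 -> 'I_n.+1}) : bool :=
  (\sum_(k < n.+1) k * m k == n) &&
  [forall k : 'I_n.+1, (0 < m k) ==> ((0 < k) && A k)].

Definition pA (A : pred nat) (n : nat) : nat :=
  #|[set m : {ffun 'I_n.+1 -> 'I_n.+1} | is_partA A m]|.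

Definition pA_alpha (A : pred nat) (alpha n : nat) : nat :=
  #|[set m : {ffun 'I_n.+1 -> 'I_n.+1} |
      is_partA A m && [forall k : 'I_n.+1, m k <= alpha]]|.

(* Solutions (N_0, N_1, ...) of n = sum_i 2^i N_i: necessarily N_i <= n and
   N_i = 0 for i > n, so they are exactly the functions N : 'I_n.+1 -> 'I_n.+1
   (extended by 0) with sum_i 2^i N_i = n. *)
Definition binary_solution (n : nat) (N : {ffun 'I_n.+1 -> 'I_n.+1}) : bool :=
  \sum_(i < n.+1) 2 ^ i * N i == n.

(** Write [x_k = 'X^k] for an admissible part [k] and [x_k = 0] otherwise.
  Counting by coefficients, [p^A(n)] is the coefficient of [X^n] in
  [prod_k (sum_j x_k^j)] and [p^A_1(t)] that of [X^t] in [D = prod_k (1 + x_k)].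
  Modulo [X^(n+1)] one has [sum_(j <= n) x_k^j = prod_(i <= n) (1 + x_k^(2^i))],
  which is the uniqueness of binary expansions; exchanging the two products gives
  [prod_i D(X^(2^i))], and the coefficient of [X^n] in this product of series is
  the sum over the solutions of [n = sum_i 2^i N_i] of [prod_i p^A_1(N_i)]. *)

From mathcomp Require Import all_boot all_algebra.
Set Implicit Arguments. Unset Strict Implicit. Unset Printing Implicit Defensive.
Import GRing.Theory Num.Theory.
Local Open Scope ring_scope.

Lemma sum_expr_pow2 (R : nzSemiRingType) (x : R) m :
  \sum_(j < 2 ^ m) x ^+ j = \prod_(i < m) (1 + x ^+ (2 ^ i)).
Proof.
elim: m => [|m IHm]; first by rewrite big_ord0 expn0 big_ord1 expr0.
rewrite big_ord_recr /= -IHm expnS mul2n -addnn big_split_ord /= mulrDr mulr1.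
by congr (_ + _); rewrite big_distrl /=; apply: eq_bigr => j _; rewrite -exprD addnC.
Qed.

Section TruncatedPolynomials.
Variable R : comNzSemiRingType.
Implicit Types p q : {poly R}.

Lemma take_polyM m p q :
  take_poly m (p * q) = take_poly m (take_poly m p * take_poly m q).
Proof.
apply/polyP => i; rewrite !coef_take_poly; case: ifP => // lt_im.
rewrite !coefM; apply: eq_bigr => j _.
have le_ji : (j <= i)%N by rewrite -ltnS.
by rewrite !coef_take_poly (leq_ltn_trans le_ji lt_im) (leq_ltn_trans (leq_subr j i) lt_im).
Qed.

Lemma take_polyM_congr m p q p' q' :
    take_poly m p = take_poly m q -> take_poly m p' = take_poly m q' ->
  take_poly m (p * p') = take_poly m (q * q').
Proof. by move=> Epq Epq'; rewrite take_polyM Epq Epq' -take_polyM. Qed.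

Lemma take_poly_prod_congr m (I : Type) (r : seq I) (P : pred I) (F G : I -> {poly R}) :
    (forall i, P i -> take_poly m (F i) = take_poly m (G i)) ->
  take_poly m (\prod_(i <- r | P i) F i) = take_poly m (\prod_(i <- r | P i) G i).
Proof.
move=> EFG; apply: (big_ind2 (fun p q => take_poly m p = take_poly m q)) => //.
exact: take_polyM_congr.
Qed.

Lemma take_poly_comp_Xn_congr m c p q : (0 < c)%N ->
    take_poly m p = take_poly m q ->
  take_poly m (p \Po 'X^c) = take_poly m (q \Po 'X^c).
Proof.
move=> c_gt0 Epq; apply/polyP => i; rewrite !coef_take_poly; case: ifP => // lt_im.
rewrite !coef_comp_poly_Xn //; case: ifP => // _.
have lt_im' : (i %/ c < m)%N by apply: leq_ltn_trans lt_im; exact: leq_div.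
by move/(congr1 (fun p => p`_(i %/ c))): Epq; rewrite !coef_take_poly lt_im'.
Qed.

Lemma take_poly_expr_coef0 m j p : p`_0 = 0 -> (m <= j)%N -> take_poly m (p ^+ j) = 0.
Proof.
move=> p0 le_mj; have take1p : take_poly 1 p = 0.
  by apply/polyP => i; rewrite coef_take_poly coef0; case: i => [|i] //=.
rewrite -(poly_take_drop 1 p) take1p add0r exprMn -exprM mul1n take_polyMXn.
by rewrite (eqP le_mj) take_poly0l mul0r.
Qed.

Lemma take_poly_prod_expr_pow2 m p : p`_0 = 0 ->
  take_poly m (\prod_(i < m) (1 + p ^+ (2 ^ i))) = take_poly m (\sum_(j < m) p ^+ j).
Proof.
move=> p0; rewrite -sum_expr_pow2 -(subnKC (ltnW (ltn_expl m (ltnSn 1)))).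
rewrite big_split_ord /= take_polyD.
rewrite [X in _ + X]take_poly_sum [X in _ + X]big1 ?addr0 // => j _.
exact: take_poly_expr_coef0 (leq_addr _ _).
Qed.

End TruncatedPolynomials.

Lemma coef_prod_sum_monomials (R : comNzSemiRingType) (I J : finType)
    (a : I -> J -> R) (w : I -> J -> nat) s :
  (\prod_i \sum_j a i j *: 'X^(w i j))`_s =
  \sum_(f : {ffun I -> J} | \sum_i w i (f i) == s) \prod_i a i (f i).
Proof.
rewrite bigA_distr_bigA /= (eq_bigr (fun f : {ffun I -> J} =>
    (\prod_i a i (f i)) *: 'X^(\sum_i w i (f i)))); first exact: coef_sumMXn.
move=> f _; rewrite -mul_polyC rmorph_prod (big_morph _ (@exprD _ 'X) (expr0 _)).
by rewrite -big_split; apply: eq_bigr => i _; rewrite -mul_polyC.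
Qed.

Lemma card_ffun_weight (I J : finType) (w : I -> J -> nat) (b : I -> J -> bool) s :
  #|[set f : {ffun I -> J} | (\sum_i w i (f i) == s) && [forall i, b i (f i)]]| =
  (\sum_(f : {ffun I -> J} | \sum_i w i (f i) == s) \prod_i b i (f i))%N.
Proof.
rewrite -sum1_card (eq_bigl _ _ (fun f => in_set _ f)) big_mkcondr /=.
apply: eq_bigr => f _.
case: (boolP [forall i, _]) => [/forallP bf | /forallPn[i /negbTE bfi]].
  by rewrite big1 // => i _; rewrite bf.
by rewrite (bigD1 i) //= bfi.
Qed.

Lemma coef_prod_sum_indicators (R : comNzSemiRingType) (I J : finType)
    (w : I -> J -> nat) (b : I -> J -> bool) s :
  (\prod_i \sum_j (b i j)%:R *: 'X^(w i j) : {poly R})`_s =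
  #|[set f : {ffun I -> J} | (\sum_i w i (f i) == s) && [forall i, b i (f i)]]|%:R.
Proof.
rewrite coef_prod_sum_monomials card_ffun_weight natr_sum.
by apply: eq_bigr => f _; rewrite natr_prod.
Qed.

Section Partitions.
Variable A : pred nat.

Definition is_part (k : nat) : bool := (0 < k)%N && A k.

Definition part_monomial (k : nat) : {poly int} := (is_part k)%:R *: 'X^k.

Definition distinct_part_gf (N : nat) : {poly int} :=
  \prod_(k < N) (1 + part_monomial k).

Lemma part_monomialX k j :
  part_monomial k ^+ j = ((0 < j)%N ==> is_part k)%:R *: 'X^(k * j).
Proof.
rewrite exprZn -exprM; case: j => [|j]; first by rewrite expr0.
by case: (is_part k); rewrite ?expr1n ?expr0n.
Qed.

Lemma part_monomial_coef0 k : (part_monomial k)`_0 = 0.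
Proof. by rewrite coefZ coefXn; case: k => [|k]; rewrite ?mul0r ?mulr0. Qed.

Lemma comp_part_monomial k c : (0 < c)%N ->
  part_monomial k \Po 'X^c = part_monomial k ^+ c.
Proof.
by move=> c_gt0; rewrite part_monomialX c_gt0 comp_polyZ comp_Xn_poly -exprM mulnC.
Qed.

Lemma coef_pA_gf n :
  (\prod_(k < n.+1) \sum_(j < n.+1) part_monomial k ^+ j)`_n = (pA A n)%:R.
Proof.
under eq_bigr do under eq_bigr do rewrite part_monomialX.
by rewrite coef_prod_sum_indicators.
Qed.

Lemma coef_distinct_part_gf t :
  (distinct_part_gf t.+1)`_t = (pA_alpha A 1 t)%:R.
Proof.
have at_most_once (k : 'I_t.+1) : 1 + part_monomial k =
    \sum_(j < t.+1) (((0 < j)%N ==> is_part k) && (j <= 1)%N)%:R *: 'X^(k * j).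
  case: t k => [|t] k.
    by rewrite big_ord1 (ord1 k) /part_monomial /= scale0r addr0 scale1r.
  rewrite 2!big_ord_recl big1 => [|j _]; last by rewrite andbF scale0r.
  by rewrite /= muln0 scale1r muln1 andbT addr0.
rewrite /distinct_part_gf (eq_bigr _ (fun k _ => at_most_once k)) coef_prod_sum_indicators.
congr (_ %:R); apply: eq_card => m; rewrite !inE /is_partA -andbA.
congr (_ && _); apply/forallP/andP => [m_ok | [/forallP m_part /forallP m_le1] k].
  by split; apply/forallP => k; case/andP: (m_ok k).
by rewrite m_part m_le1.
Qed.

Lemma take_distinct_part_gf N :
  take_poly N (distinct_part_gf N) = \poly_(t < N) (pA_alpha A 1 t)%:R.
Proof.
apply/polyP => t; rewrite coef_take_poly coef_poly; case: ifP => // lt_tN.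
rewrite -coef_distinct_part_gf.
suff: take_poly t.+1 (distinct_part_gf N) = take_poly t.+1 (distinct_part_gf t.+1).
  by move/(congr1 (fun p : {poly int} => p`_t)); rewrite !coef_take_poly ltnSn.
rewrite /distinct_part_gf -!(big_mkord xpredT (fun k => 1 + part_monomial k)).
rewrite (big_cat_nat (leq0n t.+1) lt_tN) /=.
rewrite -[X in _ = take_poly _ X]mulr1; apply: take_polyM_congr => //.
transitivity (take_poly t.+1 (\prod_(t.+1 <= k < N) (1 : {poly int})));
  last by rewrite big1_eq.
rewrite big_nat_cond [in RHS]big_nat_cond.
apply: take_poly_prod_congr => k /andP[/andP[lt_tk _] _].
have X0 : ('X : {poly int})`_0 = 0 by rewrite coefX.
by rewrite take_polyD take_polyZ (take_poly_expr_coef0 X0 lt_tk) scaler0 addr0.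
Qed.

Lemma take_dilated_distinct_part_gf N c : (0 < c)%N ->
  take_poly N (\prod_(k < N) (1 + part_monomial k ^+ c)) =
  take_poly N (\sum_(t < N) (pA_alpha A 1 t)%:R *: 'X^(c * t)).
Proof.
move=> c_gt0; have take_D : take_poly N (distinct_part_gf N) =
    take_poly N (\poly_(t < N) (pA_alpha A 1 t)%:R).
  by rewrite take_distinct_part_gf take_poly_id // size_poly.
have := take_poly_comp_Xn_congr c_gt0 take_D.
rewrite rmorph_prod poly_def raddf_sum /=.
under eq_bigr do rewrite comp_polyD comp_polyC comp_part_monomial //.
by under [in RHS]eq_bigr do rewrite comp_polyZ comp_Xn_poly -exprM.
Qed.

End Partitions.

Lemma pA_binary_decomposition (A : pred nat) n :
  pA A n = (\sum_(N : {ffun 'I_n.+1 -> 'I_n.+1} | binary_solution N)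
              \prod_(j < n.+1) pA_alpha A 1 (N j))%N.
Proof.
apply/eqP; rewrite -(eqr_nat int) -coef_pA_gf; apply/eqP.
have coef_n (p : {poly int}) : p`_n = (take_poly n.+1 p)`_n.
  by rewrite coef_take_poly ltnSn.
have binary_expansion (k : 'I_n.+1) :
    take_poly n.+1 (\sum_(j < n.+1) part_monomial A k ^+ j) =
    take_poly n.+1 (\prod_(i < n.+1) (1 + part_monomial A k ^+ (2 ^ i))).
  by rewrite take_poly_prod_expr_pow2 // part_monomial_coef0.
rewrite [LHS]coef_n (take_poly_prod_congr _ (fun k _ => binary_expansion k)).
rewrite exchange_big /=.
have pow2_gt0 (i : 'I_n.+1) : (0 < 2 ^ i)%N by rewrite expn_gt0.
rewrite (take_poly_prod_congr _
  (fun i _ => take_dilated_distinct_part_gf A n.+1 (pow2_gt0 i))).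
rewrite coef_take_poly ltnSn coef_prod_sum_monomials natr_sum.
by apply: eq_bigr => N _; rewrite natr_prod.
Qed.

Local Close Scope ring_scope.

Theorem mainTheorem1 (psi : nat -> nat)
  (psi_pos : forall k, 0 < k -> 0 < psi k)
  (psi_inj : forall k l, 0 < k -> 0 < l -> psi k = psi l -> k = l)
  (n : nat) :
  pA (imageA psi) n =
  \sum_(N : {ffun 'I_n.+1 -> 'I_n.+1} | binary_solution N)
     \prod_(j < n.+1) pA_alpha (imageA psi) 1 (N j).
Proof. exact: pA_binary_decomposition. Qed.
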